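(* Let $K$ be a field, $\mathcal A$ a commutative $K$-algebra, and $V$ a $K$-subspace of $\mathcal A$ such that every element of $\sqrt V$ is algebraic over $K$. Then $V$ is a Mathieu subspace of $\mathcal A$ if and only if $\sqrt V$ is an ideal of $\mathcal A$.
   Context: Algebras are unital. $\sqrt V$ is the set of $a\in\mathcal A$ with $a^m\in V$ for all sufficiently large $m$. A $K$-subspace $V$ of a commutative algebra $\mathcal A$ is a Mathieu subspace if whenever $a\in\mathcal A$ satisfies $a^m\in V$ for all $m\ge1$, then for every $b\in\mathcal A$ there is $N$ with $ba^m\in V$ for all $m\ge N$. *)

From HB Require Import structures.
From mathcomp Require Import all_boot all_order all_algebra.
Set Implicit Arguments. Unset Strict Implicit. Unset Printing Implicit Defensive.
Import GRing.Theory.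
Local Open Scope ring_scope.

Section MathieuDefs.
Variables (K : fieldType) (A : comAlgType K).

Definition radical (V : {pred A}) : A -> Prop :=
  fun a => exists N : nat, forall m : nat, (N <= m)%N -> a ^+ m \in V.

Definition algebraic_over (a : A) : Prop :=
  exists2 p : {poly K}, p != 0 & horner_alg a p = 0.

Definition mathieu_subspace (V : {pred A}) : Prop :=
  forall a : A, (forall m : nat, (1 <= m)%N -> a ^+ m \in V) ->
    forall b : A, exists N : nat, forall m : nat, (N <= m)%N -> b * a ^+ m \in V.

Definition is_ideal (S : A -> Prop) : Prop :=
  [/\ S 0,
      (forall x y, S x -> S y -> S (x + y)) &
      (forall r x, S x -> S (r * x))].
End MathieuDefs.

(** For an algebraic element [a] some power satisfies [a^k = a^(k+1) h(a)], and
    [e = a^k h(a)^k] is an idempotent with [a^m e = a^m] for large [m] which is a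
    polynomial in [a] with arbitrarily high order of vanishing at [0].  If [V] is
    Mathieu and [z] is in [sqrt V], applying this to a power of [z] all of whose
    powers lie in [V] gives an idempotent [e] with [A e] contained in [V] and
    absorbing the large powers of [z]; these idempotents make [sqrt V] closed
    under sums and multiples.  Conversely, if [sqrt V] is an ideal, it suffices
    that [A e] lies in [V] for every idempotent [e] of [sqrt V].  Decomposing
    [x = c e] as [x f + n] with [f] its idempotent and [n] nilpotent, [x f] lies
    in [V], and so does [n]: the idempotent attached to [e + n] is [e] itself,
    which forces [e + n] into [V]. *)

From HB Require Import structures.
From mathcomp Require Import all_boot all_order all_algebra.
From mathcomp Require Import ring zify.
Import GRing.Theory.
Local Open Scope ring_scope.
Set Implicit Arguments. Unset Strict Implicit.

Section Idempotents.
Variable R : comNzRingType.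

Lemma idem_exprS (e : R) j : e * e = e -> e ^+ j.+1 = e.
Proof. by move=> ee; elim: j => [|j IHj]; rewrite ?expr1 // exprS IHj. Qed.

Lemma lreg1D_nilpotent (n : R) j : n ^+ j = 0 -> GRing.lreg (1 + n).
Proof.
move=> nj; apply: mulrI0_lreg => z nz0.
have z_opp : z = - n * z by apply/eqP; rewrite -subr_eq0 -nz0; apply/eqP; ring.
have z_expr m : z = (- n) ^+ m * z.
  by elim: m => [|m IHm]; rewrite ?expr0 ?mul1r // exprS -mulrA -IHm.
by rewrite (z_expr j) exprNn nj mulr0 mul0r.
Qed.

Section Fitting.
Variables (a h : R) (k : nat).
Hypothesis stable : a ^+ k = a ^+ k.+1 * h.

Definition fitting_idem := a ^+ k * h ^+ k.

Lemma expr_stable j : a ^+ k = a ^+ (k + j) * h ^+ j.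
Proof.
elim: j => [|j IHj]; first by rewrite addn0 expr0 mulr1.
by rewrite {1}IHj exprD {1}stable addnS !exprS exprD; ring.
Qed.

Lemma fitting_idemE j : fitting_idem = a ^+ (k + j) * h ^+ (k + j).
Proof. by rewrite /fitting_idem {1}(expr_stable j) [h ^+ (k + j)]exprD; ring. Qed.

Lemma exprM_fitting_idem i : (k <= i)%N -> a ^+ i * fitting_idem = a ^+ i.
Proof.
move=> /subnK <-; rewrite exprD -mulrA /fitting_idem {3}(expr_stable k) exprD.
by congr (_ * _); ring.
Qed.

Lemma fitting_idem_idem : fitting_idem * fitting_idem = fitting_idem.
Proof. by rewrite {1}/fitting_idem mulrAC exprM_fitting_idem. Qed.

Lemma fitting_nilpotent : (0 < k)%N -> (a - a * fitting_idem) ^+ k = 0.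
Proof.
move=> k_gt0; have -> : a - a * fitting_idem = a * (1 - fitting_idem) by ring.
have idem1B : (1 - fitting_idem) * (1 - fitting_idem) = 1 - fitting_idem.
  by rewrite mulrBr mulr1 mulrBl mul1r fitting_idem_idem subrr subr0.
rewrite exprMn; have -> : (1 - fitting_idem) ^+ k = 1 - fitting_idem.
  by rewrite -(prednK k_gt0) idem_exprS.
by rewrite mulrBr mulr1 exprM_fitting_idem // subrr.
Qed.

End Fitting.

(* In [eR], [e + n] is the unit [1 + n], so its idempotent is [e]. *)
Lemma idem_addn_fitting (e n h : R) j i : e * e = e -> n * e = n ->
  n ^+ j = 0 -> (0 < i)%N -> (e + n) ^+ i = (e + n) ^+ i.+1 * h ->
  (e + n) * h = e.
Proof.
move=> ee ne nj i_gt0 stable; set y := e + n.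
have yE : y = (1 + n) * e by rewrite /y mulrDl mul1r ne.
have yiE : y ^+ i = (1 + n) ^+ i * e.
  by rewrite yE exprMn -(prednK i_gt0) (idem_exprS _ ee).
have ye : y ^+ i * e = y ^+ i by rewrite yiE -mulrA ee.
set z := e - y * h.
have ey : e * y = y by rewrite yE mulrCA ee.
have ez : e * z = z by rewrite /z mulrBr ee mulrA ey.
have : (1 + n) ^+ i * z = 0.
  by rewrite -ez mulrA -yiE /z mulrBr ye mulrA -exprSr -stable subrr.
move/eqP; rewrite mulrI_eq0; last by apply/lregX; apply: lreg1D_nilpotent nj.
by rewrite subr_eq0 eq_sym => /eqP.
Qed.

End Idempotents.

Lemma algebraic_expr_stable (K : fieldType) (A : comAlgType K) (a : A) :
  algebraic_over a ->
  exists k (s : {poly K}), (0 < k)%N /\ a ^+ k = a ^+ k.+1 * horner_alg a s.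
Proof.
case=> p p_neq0 pa0; have [m [q q0 Dp]] := multiplicity_XsubC p 0.
rewrite p_neq0 /= /root in q0; set c := q.[0] in q0.
have [r Dr] : exists r, q = c%:P + r * 'X.
  have /factor_theorem [r Dr] : root (q - c%:P) 0 by rewrite /root !hornerE subrr.
  by exists r; rewrite polyC0 subr0 in Dr; rewrite -Dr addrC subrK.
have qa : a ^+ m * c%:A = - (a ^+ m.+1 * horner_alg a r).
  move: pa0; rewrite Dp subr0 Dr rmorphM rmorphXn rmorphD rmorphM /=.
  rewrite horner_algX horner_algC => pa0; apply/eqP; rewrite -subr_eq0 opprK.
  by rewrite -pa0 exprS; apply/eqP; ring.
exists m.+1, (- c^-1%:P * r); split=> //.
rewrite rmorphM rmorphN /= horner_algC exprS [a * _]mulrC.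
have -> : a ^+ m.+1.+1 * (- c^-1%:A * horner_alg a r) =
          - c^-1%:A * (a ^+ m.+1 * horner_alg a r) * a by rewrite exprS; ring.
rewrite mulNr -mulrN -qa [a ^+ m * _]mulr_algr mulr_algl scalerA.
by rewrite mulVf // scale1r.
Qed.

Section Mathieu.
Variables (K : fieldType) (A : comAlgType K) (V : {pred A}).
Hypothesis subV : submod_closed V.
HB.instance Definition _ := GRing.isSubmodClosed.Build K A V subV.

Lemma mulX_horner_alg_in (b a : A) (p : {poly K}) M :
  (forall i, (M <= i)%N -> b * a ^+ i \in V) -> b * a ^+ M * horner_alg a p \in V.
Proof.
elim/poly_ind: p M => [|p c IHp] M baV; first by rewrite rmorph0 mulr0 rpred0.
rewrite rmorphD rmorphM /= horner_algX horner_algC mulrDr rpredD //.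
  have -> : b * a ^+ M * (horner_alg a p * a) = b * a ^+ M.+1 * horner_alg a p.
    by rewrite exprSr; ring.
  by apply: IHp => i /ltnW; apply: baV.
by rewrite mulr_algr rpredZ // baV.
Qed.

Lemma mul_fitting_idem_in (b a : A) (s : {poly K}) k M :
  a ^+ k = a ^+ k.+1 * horner_alg a s ->
  (forall i, (M <= i)%N -> b * a ^+ i \in V) ->
  b * fitting_idem a (horner_alg a s) k \in V.
Proof.
move=> stable baV; rewrite (fitting_idemE stable M) -rmorphXn mulrA.
by apply: mulX_horner_alg_in => i le_i; apply/baV/(leq_trans (leq_addl k M)).
Qed.

Lemma radical_mulX_in (x : A) : radical V x ->
  exists N, forall i, (N <= i)%N -> x * x ^+ i \in V.
Proof. by case=> N xV; exists N => i le_i; rewrite -exprS xV // ltnW. Qed.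

Lemma radical_idem_in (e : A) : e * e = e -> radical V e -> e \in V.
Proof. by move=> ee [N eV]; rewrite -(idem_exprS N ee) eV. Qed.

Hypothesis algV : forall a : A, radical V a -> algebraic_over a.

Lemma mathieu_radical_absorbing (z : A) : mathieu_subspace V -> radical V z ->
  exists e M, (forall b, b * e \in V) /\
              (forall m, (M <= m)%N -> z ^+ m * e = z ^+ m).
Proof.
move=> mathieuV [N zV]; set a := z ^+ N.+1.
have aV m : (1 <= m)%N -> a ^+ m \in V.
  by move=> m_gt0; rewrite -exprM zV // -{1}(muln1 N) leq_mul // ltnW.
have [k [s [_ stable]]] := algebraic_expr_stable (algV (ex_intro _ 1%N aV)).
exists (fitting_idem a (horner_alg a s) k), (N.+1 * k)%N; split.
  by move=> b; have [Nb baV] := mathieuV a aV b; apply: mul_fitting_idem_in baV.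
move=> m /subnK <-; rewrite exprD exprM -/a -mulrA exprM_fitting_idem //.
Qed.

Lemma mathieu_radical_ideal : mathieu_subspace V -> is_ideal (radical V).
Proof.
move=> mathieuV; split.
- by exists 1%N => -[|m] // _; rewrite expr0n rpred0.
- move=> x y /(mathieu_radical_absorbing mathieuV) [e1 [M1 [e1V xe1]]].
  move=> /(mathieu_radical_absorbing mathieuV) [e2 [M2 [e2V ye2]]].
  exists (M1 + M2)%N => m le_m; rewrite exprDn rpred_sum // => -[i lt_i] _ /=.
  rewrite rpredMn //; have [le_i|lt_iM2] := leqP M2 i.
    by rewrite -(ye2 _ le_i) mulrA e2V.
  have le_mi : (M1 <= m - i)%N by lia.
  by rewrite -(xe1 _ le_mi) mulrAC e1V.
- move=> r x /(mathieu_radical_absorbing mathieuV) [e [M [eV xe]]].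
  by exists M => m le_m; rewrite exprMn -(xe _ le_m) mulrA eV.
Qed.

Section RadicalIdeal.
Hypothesis idealV : is_ideal (radical V).

Lemma nilpotent_radical_in (e n : A) j : e * e = e -> radical V e ->
  n * e = n -> n ^+ j = 0 -> radical V n -> n \in V.
Proof.
case: idealV => _ radD _ ee eR ne nj nR; set y := e + n.
have yR : radical V y by apply: radD.
have [i [u [i_gt0 stable]]] := algebraic_expr_stable (algV yR).
have yu : y * horner_alg y u = e := idem_addn_fitting ee ne nj i_gt0 stable.
have idem_e : fitting_idem y (horner_alg y u) i = e.
  by rewrite /fitting_idem -exprMn yu -(prednK i_gt0) idem_exprS.
have yV : y \in V.
  have [N yyV] := radical_mulX_in yR.
  have := mul_fitting_idem_in stable yyV.
  by rewrite idem_e /y mulrDl ee ne.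
have -> : n = y - e by rewrite /y addrC addKr.
by rewrite rpredB // radical_idem_in.
Qed.

Lemma idem_radical_mul_in (e c : A) : e * e = e -> radical V e -> c * e \in V.
Proof.
case: (idealV) => _ radD radM ee eR; set x := c * e.
have xR : radical V x by apply: radM.
have [j [t [j_gt0 stable]]] := algebraic_expr_stable (algV xR).
set f := fitting_idem x (horner_alg x t) j.
have xfV : x * f \in V.
  by have [N xxV] := radical_mulX_in xR; apply: mul_fitting_idem_in stable xxV.
set n := x - x * f.
have xe : x * e = x by rewrite /x -mulrA ee.
have ne : n * e = n by rewrite /n mulrBl xe mulrAC xe.
have nR : radical V n.
  by rewrite /n; apply: radD => //; rewrite -mulrN mulrC; apply: radM.
have nV := nilpotent_radical_in ee eR ne (fitting_nilpotent stable j_gt0) nR.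
by rewrite -(subrK (x * f) x) rpredD.
Qed.

Lemma radical_ideal_mathieu : mathieu_subspace V.
Proof.
move=> a aV b; have aR : radical V a by exists 1%N.
have [k [s [_ stable]]] := algebraic_expr_stable (algV aR).
set e := fitting_idem a (horner_alg a s) k.
have eR : radical V e.
  exists 1%N => -[|m] // _; rewrite idem_exprS ?fitting_idem_idem //.
  rewrite -[e]mul1r; apply: (mul_fitting_idem_in (M := 1%N) stable) => i.
  by rewrite mul1r; apply: aV.
exists k => m le_km; rewrite -(exprM_fitting_idem stable le_km) mulrA.
by rewrite idem_radical_mul_in ?fitting_idem_idem.
Qed.

End RadicalIdeal.
End Mathieu.

Theorem theorem4p12 (K : fieldType) (A : comAlgType K) (V : {pred A})
    (hV : submod_closed V)
    (halg : forall a : A, radical V a -> algebraic_over a) :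
  mathieu_subspace V <-> is_ideal (radical V).
Proof.
split; [exact: mathieu_radical_ideal | exact: radical_ideal_mathieu].
Qed.
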